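(* Let $n\ge1$, $N=2^n$, and let $B_m$ ($0\le m\le n-1$) be the maps defined below. For a finitely supported $H:\{0,1\}^n\times\{0,1\}^n\times\mathbb{Z}\times\mathbb{Z}\to\mathbb{R}$, regarded as a function on $\{0,1\}^0\times\{0,1\}^n\times\{0,1\}^n\times\mathbb{Z}^2$, the function $P=B_0\circ B_1\circ\cdots\circ B_{n-1}(H)$, defined on $\{0,1\}^n\times\{0,1\}^0\times\{0,1\}^0\times\mathbb{Z}^2$, satisfies, for all $\mathbf v\in\{0,1\}^n$ and $e_1,e_2\in\mathbb{Z}$, $$P(\mathbf v\mid\emptyset\mid\emptyset\mid e_1\mid e_2)=\sum_{\mathbf s_1\in\{0,1\}^n}\sum_{\mathbf s_2\in\{0,1\}^n}H\big(\mathbf s_1\mid\mathbf s_2\mid e_1-l^n_{\lambda(\mathbf s_1)}(\mathbf v)\mid e_2-l^n_{\lambda(\mathbf s_2)}(\mathbf v)\big).$$ Equivalently, $(x,y,z)\mapsto P(\lambda^{-1}(x)\mid\emptyset\mid\emptyset\mid y\mid z)$ is the adjoint of the linear map $f\mapsto \tilde f$, $\tilde f(\mathbf s_1\mid\mathbf s_2\mid d_1\mid d_2)=\sum_{\mathbf u\in\{0,1\}^n}f\big(\lambda(\mathbf u),\,l^n_{\lambda(\mathbf s_1)}(\mathbf u)+d_1,\,l^n_{\lambda(\mathbf s_2)}(\mathbf u)+d_2\big)$ (the 3D discrete John transform), acting on finitely supported $f:\{0,\dots,N-1\}\times\mathbb{Z}^2\to\mathbb{R}$.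
   Context: Bit vectors: for $\mathbf u=(u_0,\dots,u_{k-1})\in\{0,1\}^k$, $\lambda(\mathbf u)=\sum_{i=0}^{k-1}u_i2^i$ (first entry least significant), $\lambda(\emptyset)=0$; $(a,\boldsymbol\sigma)$ denotes the vector with first entry $a$ followed by the entries of $\boldsymbol\sigma$. Discrete lines: $l^0_s(\emptyset)=0$ and $l^k_s(u_0,\dots,u_{k-1})=l^{k-1}_{\lfloor s/2\rfloor}(u_0,\dots,u_{k-2})+u_{k-1}\lfloor (s+1)/2\rfloor$ for $k\ge1$, $s\ge0$. For $0\le m\le n-1$ and finitely supported $H$ on $\{0,1\}^{n-m-1}\times\{0,1\}^{m+1}\times\{0,1\}^{m+1}\times\mathbb{Z}^2$, $B_mH$ is the function on $\{0,1\}^{n-m}\times\{0,1\}^m\times\{0,1\}^m\times\mathbb{Z}^2$ given by $(B_mH)((w,\mathbf v)\mid\boldsymbol\sigma_1\mid\boldsymbol\sigma_2\mid d_1\mid d_2)=\sum_{a,b\in\{0,1\}}H(\mathbf v\mid(a,\boldsymbol\sigma_1)\mid(b,\boldsymbol\sigma_2)\mid d_1-w(a+\lambda(\boldsymbol\sigma_1))\mid d_2-w(b+\lambda(\boldsymbol\sigma_2)))$. *)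

From mathcomp Require Import all_boot all_order all_algebra.
Set Implicit Arguments. Unset Strict Implicit. Unset Printing Implicit Defensive.
Import Order.TTheory GRing.Theory Num.Theory.
Local Open Scope ring_scope.

(* Bit vectors are represented as seq bool (first entry = least significant). *)
Fixpoint lam (u : seq bool) : nat :=
  match u with [::] => 0%N | b :: u' => (b + 2 * lam u')%N end.

Fixpoint line (k s : nat) (u : seq bool) : nat :=
  match k with
  | 0 => 0%N
  | k'.+1 => (line k' s./2 u + nth false u k' * (s.+1)./2)%N
  end.

(* A function of (first bit vector | sigma_1 | sigma_2 | d_1 | d_2). *)
Definition fn5 (R : Type) := seq bool -> seq bool -> seq bool -> int -> int -> R.

(* The formula does not depend on m (m only fixes the sizes of the arguments);
   on arguments of the sizes prescribed in the paper it is exactly B_m. *)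
Definition B (R : ringType) (m : nat) (H : fn5 R) : fn5 R :=
  fun wv s1 s2 d1 d2 =>
    match wv with
    | [::] => 0
    | w :: v => \sum_(a : bool) \sum_(b : bool)
        H v (a :: s1) (b :: s2)
          (d1 - ((w * (a + lam s1))%N)%:Z) (d2 - ((w * (b + lam s2))%N)%:Z)
    end.

Definition embedH (R : ringType) (n : nat)
    (H : n.-tuple bool -> n.-tuple bool -> int -> int -> R) : fn5 R :=
  fun v s1 s2 d1 d2 =>
    match v with
    | [::] =>
        match (insub s1 : option (n.-tuple bool)), (insub s2 : option (n.-tuple bool)) with
        | Some t1, Some t2 => H t1 t2 d1 d2
        | _, _ => 0
        end
    | _ => 0
    end.

Definition Bcomp (R : ringType) (n : nat) (G : fn5 R) : fn5 R :=
  foldr (fun m F => B m F) G (iota 0 n).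

Definition finitely_supported (R : ringType) (n : nat)
    (H : n.-tuple bool -> n.-tuple bool -> int -> int -> R) : Prop :=
  exists M : nat, forall s1 s2 d1 d2,
    H s1 s2 d1 d2 != 0 -> (`|d1| <= M)%N /\ (`|d2| <= M)%N.

From mathcomp Require Import all_boot all_order all_algebra.
From mathcomp Require Import zify.
Import GRing.Theory.
Local Open Scope ring_scope.

(* Each application of [B] consumes the leading bit [w] of the vector and
   prepends a bit [a] to each sigma, shifting [d] by [w * (a + lam sigma)].
   Unfolding all of them writes [P] as a sum of [H] over the completed sigmas,
   shifted by the accumulated offset [shift].  That offset is the discrete line:
   for [S = lam (rev u ++ a :: s)] with [k = size u] one has
   [(S %/ 2 ^ k).+1./2 = a + lam s], the coefficient of [w] in [line_cons]. *)

Lemma lam_cat (x y : seq bool) : lam (x ++ y) = (lam x + 2 ^ size x * lam y)%N.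
Proof. by elim: x => [|b x IH] /=; rewrite ?mul1n // IH expnS; lia. Qed.

Lemma lam_ltn (x : seq bool) : (lam x < 2 ^ size x)%N.
Proof. by elim: x => [|b x IH] //=; rewrite expnS; case: b => /=; lia. Qed.

Lemma line_cons (k S : nat) (w : bool) (v : seq bool) :
  line k.+1 S (w :: v) = (w * (S %/ 2 ^ k).+1./2 + line k S v)%N.
Proof.
elim: k S => [|k IH] S; first by rewrite /= divn1 addn0.
rewrite -[LHS]/(line k.+1 S./2 (w :: v) + nth false v k * S.+1./2)%N IH -addnA.
by congr (_ * _ + _)%N; rewrite -[S./2]divn2 -divnMA -expnS.
Qed.

(* Offset accumulated on [d] while the bits [u] are prepended, one per bit of
   [v], to the already fixed part [s] of sigma. *)
Fixpoint shift (v u s : seq bool) : nat :=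
  match v, u with
  | w :: v', a :: u' => (w * (a + lam s) + shift v' u' (a :: s))%N
  | _, _ => 0%N
  end.

Lemma shift_line (v u s : seq bool) : size u = size v ->
  shift v u s = line (size v) (lam (catrev u s)) v.
Proof.
elim: v u s => [|w v IH] [|a u] s //= [size_u].
rewrite IH // -/(line (size v).+1 _ (w :: v)) line_cons; congr (_ * _ + _)%N.
have lam_revu : (lam (rev u) < 2 ^ size v)%N by rewrite -size_u -size_rev lam_ltn.
rewrite catrevE lam_cat size_rev size_u [(lam (rev u) + _)%N]addnC.
rewrite [(2 ^ _ * _)%N]mulnC divnMDl ?expn_gt0 //.
by rewrite divn_small // addn0; case: a; rewrite /= mul2n ?doubleK ?uphalf_double.
Qed.

Lemma Bcomp_iter (R : nzRingType) (n : nat) (G : fn5 R) :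
  Bcomp n G = iter n (B 0) G.
Proof.
rewrite /Bcomp -[X in iter X](size_iota 0 n).
by elim: (iota 0 n) => //= m l ->.
Qed.

Lemma big_tuple0 (R : nzRingType) (T : finType) (f : 0.-tuple T -> R) :
  \sum_(t : 0.-tuple T) f t = f [tuple].
Proof. by rewrite (big_pred1 [tuple]) // => t; apply/esym/eqP/tuple0. Qed.

Lemma big_tuple_cons (R : nzRingType) (T : finType) (k : nat)
    (F : k.+1.-tuple T -> R) :
  \sum_(t : k.+1.-tuple T) F t =
  \sum_(a : T) \sum_(t : k.-tuple T) F [tuple of a :: t].
Proof.
rewrite pair_big (reindex (fun p : T * k.-tuple T => [tuple of p.1 :: p.2])) //.
exists (fun t : k.+1.-tuple T => (thead t, [tuple of behead t])).
  by move=> [a t] _; congr (_, _); apply: val_inj.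
by move=> t _; rewrite [RHS]tuple_eta.
Qed.

Lemma iter_B_sum (R : nzRingType) (k : nat) (F : fn5 R) (v s1 s2 : seq bool)
    (d1 d2 : int) : size v = k ->
  iter k (B 0) F v s1 s2 d1 d2 =
  \sum_(t1 : k.-tuple bool) \sum_(t2 : k.-tuple bool)
    F [::] (catrev t1 s1) (catrev t2 s2)
      (d1 - (shift v t1 s1)%:Z) (d2 - (shift v t2 s2)%:Z).
Proof.
elim: k v s1 s2 d1 d2 => [|k IH] [|w v] s1 s2 d1 d2 // => [_|[size_v]].
  by rewrite !big_tuple0 /= !subr0.
rewrite iterS /B big_tuple_cons; apply: eq_bigr => a _.
under eq_bigr => b _ do rewrite IH //.
rewrite exchange_big; apply: eq_bigr => t1 _.
rewrite big_tuple_cons; apply: eq_bigr => b _; apply: eq_bigr => t2 _ /=.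
by rewrite !PoszD !opprD !addrA.
Qed.

Lemma rev_tuple_inj (T : Type) (n : nat) :
  injective (fun t : n.-tuple T => [tuple of rev t]).
Proof. by move=> x y /(congr1 val) /(congr1 rev); rewrite /= !revK => /val_inj. Qed.

Theorem mainTheorem4 (R : realFieldType) (n : nat) (hn : (1 <= n)%N)
    (H : n.-tuple bool -> n.-tuple bool -> int -> int -> R)
    (Hfin : finitely_supported H)
    (v : n.-tuple bool) (e1 e2 : int) :
  Bcomp n (embedH H) v [::] [::] e1 e2 =
  \sum_(s1 : n.-tuple bool) \sum_(s2 : n.-tuple bool)
     H s1 s2 (e1 - (line n (lam s1) v)%:Z) (e2 - (line n (lam s2) v)%:Z).
Proof.
rewrite Bcomp_iter (@iter_B_sum _ n) ?size_tuple //.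
rewrite (reindex_inj (@rev_tuple_inj _ n)); apply: eq_bigr => t1 _.
rewrite (reindex_inj (@rev_tuple_inj _ n)); apply: eq_bigr => t2 _ /=.
by rewrite !shift_line ?size_rev ?size_tuple // /embedH !catrevE !cats0 !revK !valK.
Qed.
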